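(* Let $R$ be a unital associative ring and $$A=\begin{pmatrix}1&1&1\\1&a&b\\1&c&d\end{pmatrix}\in\widehat{\cal S},\quad \Phi(A)=\begin{pmatrix}1&1&1\\1&a'&b'\\1&c'&d'\end{pmatrix},\quad \Phi^{-1}(A)=\begin{pmatrix}1&1&1\\1&a^\circ&b^\circ\\1&c^\circ&d^\circ\end{pmatrix}.$$ Then $$a'=(d-1)^{-1}(d-c)a^{-1}(db^{-1}-ca^{-1})^{-1}(db^{-1}-1),\qquad a^\circ=(d-1)(d-c)^{-1}(db^{-1}-ca^{-1})(db^{-1}-1)^{-1}.$$
   Context: $R^*$: units of $R$. $M_3^*(R)$: invertible $3\times3$ matrices; $M_3^\star(R)$: matrices with all entries in $R^*$. $J_1(M)=M^{-1}$ on $M_3^*(R)$; $J_2(M)_{jk}=(M_{kj})^{-1}$ on $M_3^\star(R)$; $J=J_2\circ J_1$, $J^{-1}=J_1\circ J_2$. $\widehat M_3(R)$: matrices whose first row and column consist of $1$'s. For $A=\{a_{j,k}\}\in M_3^\star(R)$: $\Lambda^L(A)_{j,k}=a_{1,1}a_{j,1}^{-1}a_{j,k}a_{1,k}^{-1}$, $\Lambda^R(A)_{j,k}=a_{j,1}^{-1}a_{j,k}a_{1,k}^{-1}a_{1,1}$. $\Phi(A)=J_2(\Lambda^L(A^{-1}))$ and $\Phi^{-1}(A)=\Lambda^R(J^{-1}(A))$ (both defined on $\widehat{\cal S}$). ${\cal S}=\{M\in M_3(R):$ all square submatrices of $M$ are invertible and $J_2(M)$ is invertible$\}$, $\widehat{\cal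 S}={\cal S}\cap\widehat M_3(R)$. *)

From mathcomp Require Import all_boot all_order all_algebra.
From Stdlib Require Import ClassicalEpsilon.
Set Implicit Arguments. Unset Strict Implicit. Unset Printing Implicit Defensive.
Import GRing.Theory.
Local Open Scope ring_scope.

Section Defs.
Variable R : unitRingType.

Definition mx_invertible (k : nat) (M : 'M[R]_k) : Prop :=
  exists N : 'M[R]_k, M *m N = 1%:M /\ N *m M = 1%:M.

(* the (two-sided) inverse, chosen by classical epsilon; it is unique when it exists *)
Definition ncinv (k : nat) (M : 'M[R]_k) : 'M[R]_k :=
  epsilon (inhabits M) (fun N : 'M[R]_k => M *m N = 1%:M /\ N *m M = 1%:M).

Definition J1 (M : 'M[R]_3) : 'M[R]_3 := ncinv M.
Definition J2 (M : 'M[R]_3) : 'M[R]_3 := \matrix_(j < 3, k < 3) (M k j)^-1.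
Definition J (M : 'M[R]_3) : 'M[R]_3 := J2 (J1 M).
Definition Jinv (M : 'M[R]_3) : 'M[R]_3 := J1 (J2 M).

Definition LambdaL (A : 'M[R]_3) : 'M[R]_3 :=
  \matrix_(j < 3, k < 3) (A 0 0 * (A j 0)^-1 * A j k * (A 0 k)^-1).
Definition LambdaR (A : 'M[R]_3) : 'M[R]_3 :=
  \matrix_(j < 3, k < 3) ((A j 0)^-1 * A j k * (A 0 k)^-1 * A 0 0).

Definition Phi (A : 'M[R]_3) : 'M[R]_3 := J2 (LambdaL (J1 A)).
Definition PhiInv (A : 'M[R]_3) : 'M[R]_3 := LambdaR (Jinv A).

(* square submatrices: choose k rows and k columns (in increasing order) *)
Definition in_S (M : 'M[R]_3) : Prop :=
  (forall (k : nat) (f g : 'I_k -> 'I_3),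
      {homo f : x y / (x < y)%N} -> {homo g : x y / (x < y)%N} ->
      mx_invertible (mxsub f g M))
  /\ mx_invertible (J2 M).

Definition in_hatM (M : 'M[R]_3) : Prop := forall i : 'I_3, M 0 i = 1 /\ M i 0 = 1.

Definition in_hatS (M : 'M[R]_3) : Prop := in_S M /\ in_hatM M.

(* the matrix [[1,1,1],[1,a,b],[1,c,d]] *)
Definition hatmx (a b c d : R) : 'M[R]_3 :=
  \matrix_(i < 3, j < 3)
    (if (i == 0 :> nat) || (j == 0 :> nat) then 1
     else if (i == 1 :> nat) then (if (j == 1 :> nat) then a else b)
     else (if (j == 1 :> nat) then c else d)).
End Defs.

Definition i1 : 'I_3 := inord 1.

From mathcomp Require Import all_boot all_order all_algebra.
From Stdlib Require Import ClassicalEpsilon.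
From Stdlib Require Ncring Ncring_tac.
Set Implicit Arguments.
Unset Strict Implicit.
Unset Printing Implicit Defensive.
Import GRing.Theory.
Local Open Scope ring_scope.

(* Let B be the two-sided inverse of A = hatmx a b c d.  In column 1 of A B = 1,
   rows 0 and 2 give (1 - d) B01 = (d - c) B11; in column 0, rows 1 and 2
   express B10 as a left multiple of B00.  Transposition turns B A = 1 into
   A^T B^T = 1 over the converse ring, and A^T is again of the form hatmx, so
   the same computation gives the mirror relations for rows 0 and 1 of B.
   Hence B00 and B11 are units, and the entry (1,1) of Phi A = J2 (LambdaL B),
   namely (B00 B10^-1 B11 B01^-1)^-1, is the product of the two multipliers.
   Running the argument on the inverse of J2 A = hatmx a^-1 c^-1 b^-1 d^-1
   computes PhiInv A.  Everything inverted along the way is a unit, being an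
   entry of A or the Schur complement of a 2x2 minor of A, such as
   d - c a^-1 b. *)

Definition i2 : 'I_3 := inord 2.

Lemma val_i1 : i1 = 1%N :> nat. Proof. by rewrite inordK. Qed.
Lemma val_i2 : i2 = 2%N :> nat. Proof. by rewrite inordK. Qed.

Definition ncring_ops (R : unitRingType) :=
  @Ncring.Build_Ring_ops R 0 1 +%R *%R (fun x y => x - y) -%R eq.

Lemma ncring_laws (R : unitRingType) : Ncring.Ring (Ro := ncring_ops R).
Proof.
constructor=> //; try exact: RelationClasses.eq_equivalence;
  try by move=> ? ? -> ? ? ->.
- by move=> ? ? ->.
- exact: add0r.
- exact: addrC.
- exact: addrA.
- exact: mul1r.
- exact: mulr1.
- exact: mulrA.
- exact: mulrDl.
- by move=> x y z; exact: mulrDr.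
- exact: subrr.
Qed.

Ltac ncring := Ncring_tac.non_commutative_ring.
Ltac unit_tac := repeat first [assumption | apply: rpredM | rewrite unitrN | rewrite unitrV].

Lemma mulmx3E (R : pzSemiRingType) (M N : 'M[R]_3) i j :
  (M *m N) i j = M i 0 * N 0 j + M i i1 * N i1 j + M i i2 * N i2 j.
Proof.
rewrite mxE !big_ord_recl big_ord0 addr0 addrA.
have -> : lift ord0 (@ord0 1) = i1 by apply: val_inj; rewrite /= val_i1.
by have -> : lift ord0 (lift ord0 (@ord0 0)) = i2 by apply: val_inj; rewrite /= val_i2.
Qed.

Lemma mulmx2E (R : pzSemiRingType) (M N : 'M[R]_2) i j :
  (M *m N) i j = M i 0 * N 0 j + M i 1 * N 1 j.
Proof.
rewrite mxE !big_ord_recl big_ord0 addr0.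
by have -> : lift ord0 (@ord0 0) = 1 by apply: val_inj.
Qed.

Section HatmxEntries.
Variables (R : unitRingType) (a b c d : R).
Lemma hatmx00 : hatmx a b c d 0 0 = 1. Proof. by rewrite mxE. Qed.
Lemma hatmx01 : hatmx a b c d 0 i1 = 1. Proof. by rewrite mxE. Qed.
Lemma hatmx02 : hatmx a b c d 0 i2 = 1. Proof. by rewrite mxE. Qed.
Lemma hatmx10 : hatmx a b c d i1 0 = 1. Proof. by rewrite mxE val_i1. Qed.
Lemma hatmx11 : hatmx a b c d i1 i1 = a. Proof. by rewrite mxE val_i1. Qed.
Lemma hatmx12 : hatmx a b c d i1 i2 = b. Proof. by rewrite mxE val_i1 val_i2. Qed.
Lemma hatmx20 : hatmx a b c d i2 0 = 1. Proof. by rewrite mxE val_i2. Qed.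
Lemma hatmx21 : hatmx a b c d i2 i1 = c. Proof. by rewrite mxE val_i1 val_i2. Qed.
Lemma hatmx22 : hatmx a b c d i2 i2 = d. Proof. by rewrite mxE val_i2. Qed.
End HatmxEntries.

Definition hatmxE :=
  (hatmx00, hatmx01, hatmx02, hatmx10, hatmx11, hatmx12, hatmx20, hatmx21, hatmx22).

Lemma tr_hatmx (R : unitRingType) (a b c d : R) : (hatmx a b c d)^T = hatmx a c b d.
Proof.
apply/matrixP=> i j; rewrite !mxE.
by case: i => [[|[|[|?]]] ?]; case: j => [[|[|[|?]]] ?].
Qed.

Lemma hatmx_mulmx_tr (R : unitRingType) (a b c d : R) (B : 'M[R]_3) :
  B *m hatmx a b c d = 1%:M -> @hatmx R^c a c b d *m B^T = 1%:M.
Proof.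
move=> Bhat; rewrite -tr_hatmx.
transitivity ((B *m hatmx a b c d)^T); last by rewrite Bhat tr_scalar_mx.
exact (esym (trmx_mul_rev B (hatmx a b c d))).
Qed.

Section NoncommutativeAlgebra.
Variable R : unitRingType.
Let R_ops := ncring_ops R.
Let R_ring := ncring_laws R.
#[local] Existing Instances R_ops R_ring.

Lemma unitr_linv_rinv (x y z : R) : y * x = 1 -> x * z = 1 -> x \is a GRing.unit.
Proof.
move=> yx xz; have yz : y = z by rewrite -[y]mulr1 -xz mulrA yx mul1r.
by apply/unitrP; exists y; rewrite {2}yz.
Qed.

Lemma subrMV (x y w : R) : w \is a GRing.unit -> x * w^-1 - y = (x - y * w) * w^-1.
Proof. by move=> uw; rewrite mulrBl mulrK. Qed.

Lemma sub1rV (x : R) : x \is a GRing.unit -> 1 - x^-1 = (x - 1) * x^-1.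
Proof. by move=> ux; rewrite mulrBl mulrV ?mul1r. Qed.

Lemma subrVV (x y : R) : x \is a GRing.unit -> y \is a GRing.unit ->
  x^-1 - y^-1 = y^-1 * (y - x) * x^-1.
Proof. by move=> ux uy; rewrite mulrBr mulrBl mulVr ?mulrK // mul1r. Qed.

(* The Schur complement of the lower block of [J2 A], in terms of that of A. *)
Lemma schur_invE (a b c d : R) :
  a \is a GRing.unit -> b \is a GRing.unit -> c \is a GRing.unit -> d \is a GRing.unit ->
  d^-1 - b^-1 * a * c^-1 = - (b^-1 * a * c^-1 * (d - c * a^-1 * b) * d^-1).
Proof.
move=> ua ub uc ud; rewrite mulrBr mulrBl !mulrA mulrK // mulrVK // mulrK // mulVr // mul1r.
by rewrite opprB.
Qed.

Lemma invr_cross_ratioL (x y u w : R) :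
  x \is a GRing.unit -> y \is a GRing.unit -> u \is a GRing.unit -> w \is a GRing.unit ->
  (x * (w * x)^-1 * y * (u * y)^-1)^-1 = u * w.
Proof.
move=> ux uy uu uw; rewrite (invrM uw ux) (invrM uu uy) !mulrA mulrV // mul1r mulrK //.
by rewrite -invrM // invrK.
Qed.

Lemma cross_ratioR (x y v t : R) :
  x \is a GRing.unit -> y \is a GRing.unit -> v \is a GRing.unit -> t \is a GRing.unit ->
  (y * v)^-1 * y * (x * t)^-1 * x = v^-1 * t^-1.
Proof. by move=> ux uy uv ut; rewrite (invrM uy uv) (invrM ux ut) !mulrA mulrVK // mulrVK. Qed.

Lemma mx1_invertible_unit (M : 'M[R]_1) :
  mx_invertible M -> M 0 0 \is a GRing.unit.
Proof.
move=> [N [MN NM]]; apply: (@unitr_linv_rinv _ (N 0 0) (N 0 0)).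
- by move/matrixP/(_ 0 0): NM; rewrite !mxE big_ord1.
- by move/matrixP/(_ 0 0): MN; rewrite !mxE big_ord1.
Qed.

Lemma mx2_schur_unit (M : 'M[R]_2) : mx_invertible M -> M 0 0 \is a GRing.unit ->
  M 1 1 - M 1 0 * (M 0 0)^-1 * M 0 1 \is a GRing.unit.
Proof.
move=> [N [MN NM]] u00.
have [e01 e11] : M 0 0 * N 0 1 + M 0 1 * N 1 1 = 0 /\ M 1 0 * N 0 1 + M 1 1 * N 1 1 = 1.
  by rewrite -!mulmx2E MN !mxE.
have [f10 f11] : N 1 0 * M 0 0 + N 1 1 * M 1 0 = 0 /\ N 1 0 * M 0 1 + N 1 1 * M 1 1 = 1.
  by rewrite -!mulmx2E NM !mxE.
apply: (@unitr_linv_rinv _ (N 1 1) (N 1 1)); apply: subr0_eq.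
- transitivity ((N 1 0 * M 0 1 + N 1 1 * M 1 1 - 1)
      - (N 1 0 * M 0 0 + N 1 1 * M 1 0) * (M 0 0)^-1 * M 0 1
      + N 1 0 * (M 0 0 * (M 0 0)^-1 - 1) * M 0 1); first ncring.
  by rewrite f10 f11 mulrV // !subrr; ncring.
- transitivity ((M 1 0 * N 0 1 + M 1 1 * N 1 1 - 1)
      - M 1 0 * (M 0 0)^-1 * (M 0 0 * N 0 1 + M 0 1 * N 1 1)
      + M 1 0 * ((M 0 0)^-1 * M 0 0 - 1) * N 0 1); first ncring.
  by rewrite e01 e11 mulVr // !subrr; ncring.
Qed.

Section HatmxInverseColumns.
Variables (a b c d : R) (B : 'M[R]_3).
Hypothesis hatmxB : hatmx a b c d *m B = 1%:M.

Lemma hatmx_inv_colE (j : 'I_3) :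
  [/\ B 0 j + B i1 j + B i2 j = (0 == j :> nat)%:R,
      B 0 j + a * B i1 j + b * B i2 j = (i1 == j :> nat)%:R &
      B 0 j + c * B i1 j + d * B i2 j = (i2 == j :> nat)%:R].
Proof.
have entry i : (hatmx a b c d *m B) i j = (i == j :> nat)%:R by rewrite hatmxB mxE.
by move: (entry 0) (entry i1) (entry i2); rewrite !mulmx3E !hatmxE !mul1r.
Qed.

Lemma hatmx_inv_col0E :
  [/\ B 0 0 + B i1 0 + B i2 0 = 1, B 0 0 + a * B i1 0 + b * B i2 0 = 0 &
      B 0 0 + c * B i1 0 + d * B i2 0 = 0].
Proof. by have := hatmx_inv_colE 0; rewrite /= val_i1 val_i2. Qed.

Lemma hatmx_inv_col1E :
  [/\ B 0 i1 + B i1 i1 + B i2 i1 = 0, B 0 i1 + a * B i1 i1 + b * B i2 i1 = 1 &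
      B 0 i1 + c * B i1 i1 + d * B i2 i1 = 0].
Proof. by have := hatmx_inv_colE i1; rewrite /= val_i1 val_i2. Qed.

Lemma hatmx_inv_col1 : 1 - d \is a GRing.unit ->
  B 0 i1 = (1 - d)^-1 * (d - c) * B i1 i1.
Proof.
move=> u1d; have [e0 _ e2] := hatmx_inv_col1E.
rewrite -mulrA; apply: (canRL (mulKr u1d)); apply: subr0_eq.
transitivity ((B 0 i1 + c * B i1 i1 + d * B i2 i1) - d * (B 0 i1 + B i1 i1 + B i2 i1)).
  by ncring.
by rewrite e0 e2 mulr0 subrr.
Qed.

Lemma hatmx_inv11_linv : 1 - d \is a GRing.unit -> exists y, y * B i1 i1 = 1.
Proof.
move=> u1d; have [e0 e1 _] := hatmx_inv_col1E.
have x2E : B i2 i1 = - (B 0 i1 + B i1 i1) by apply/eqP; rewrite -addr_eq0 addrC e0.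
exists ((1 - d)^-1 * (d - c) + a - b * ((1 - d)^-1 * (d - c) + 1)).
by apply: (etrans _ e1); rewrite x2E (hatmx_inv_col1 u1d); ncring.
Qed.

Lemma hatmx_inv_col0 :
  a \is a GRing.unit -> b \is a GRing.unit -> d - c * a^-1 * b \is a GRing.unit ->
  B i1 0 = - (a^-1 * b * (d - c * a^-1 * b)^-1 * (d * b^-1 - 1)) * B 0 0.
Proof.
move=> ua ub uS; have [_ e1 e2] := hatmx_inv_col0E.
have uSba : (d - c * a^-1 * b) * b^-1 * a \is a GRing.unit by rewrite !rpredM ?unitrV.
have rel : (d - c * a^-1 * b) * b^-1 * a * B i1 0 = (1 - d * b^-1) * B 0 0.
  apply: subr0_eq.
  transitivity (d * b^-1 * (B 0 0 + a * B i1 0 + b * B i2 0) - (B 0 0 + c * B i1 0 + d * B i2 0)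
    + c * (1 - a^-1 * a) * B i1 0 + c * a^-1 * (1 - b * b^-1) * a * B i1 0
    + d * (1 - b^-1 * b) * B i2 0); first ncring.
  by rewrite e1 e2 !mulVr ?mulrV // !subrr; ncring.
rewrite -[B i1 0](mulKr uSba) rel invrM ?rpredM ?unitrV // invrM ?unitrV // invrK.
ncring.
Qed.

Lemma hatmx_inv00_linv :
  a \is a GRing.unit -> b \is a GRing.unit -> d - c * a^-1 * b \is a GRing.unit ->
  exists y, y * B 0 0 = 1.
Proof.
move=> ua ub uS; have [e0 e1 _] := hatmx_inv_col0E.
have x2E : B i2 0 = - (b^-1 * (B 0 0 + a * B i1 0)).
  by rewrite -mulrN; apply: (canRL (mulKr ub)); apply/eqP; rewrite -addr_eq0 addrC e1.
set w := - (a^-1 * b * (d - c * a^-1 * b)^-1 * (d * b^-1 - 1)).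
exists (1 + w - b^-1 * (1 + a * w)).
by apply: (etrans _ e0); rewrite x2E (hatmx_inv_col0 ua ub uS) -/w; ncring.
Qed.
End HatmxInverseColumns.
End NoncommutativeAlgebra.

Section HatmxInverseRows.
Variables (R : unitRingType) (a b c d : R) (B : 'M[R]_3).
Hypothesis Bhatmx : B *m hatmx a b c d = 1%:M.
Let hatmxBt := hatmx_mulmx_tr Bhatmx.

Lemma hatmx_inv_row1 : 1 - d \is a GRing.unit ->
  B i1 0 = B i1 i1 * ((d - b) * (1 - d)^-1).
Proof. by move=> u1d; have := hatmx_inv_col1 hatmxBt u1d; rewrite !mxE. Qed.

Lemma hatmx_inv11_rinv : 1 - d \is a GRing.unit -> exists z, B i1 i1 * z = 1.
Proof. by move=> u1d; have [z] := hatmx_inv11_linv hatmxBt u1d; rewrite mxE; exists z. Qed.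

Lemma hatmx_inv_row0 :
  a \is a GRing.unit -> c \is a GRing.unit -> d - c * a^-1 * b \is a GRing.unit ->
  B 0 i1 = B 0 0 * - ((c^-1 * d - 1) * (d - c * a^-1 * b)^-1 * c * a^-1).
Proof.
move=> ua uc uS; rewrite -mulrA in uS *.
have := hatmx_inv_col0 hatmxBt ua uc uS; rewrite !mxE => e.
(* [hatmx_inv_col0] over [R^c], read back in [R]. *)
change (B 0 i1 = B 0 0 * - ((c^-1 * d - 1) * ((d - c * (a^-1 * b))^-1 * (c * a^-1)))) in e.
by rewrite e !mulrA.
Qed.

Lemma hatmx_inv00_rinv :
  a \is a GRing.unit -> c \is a GRing.unit -> d - c * a^-1 * b \is a GRing.unit ->
  exists z, B 0 0 * z = 1.
Proof.
move=> ua uc uS; rewrite -mulrA in uS.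
by have [z] := hatmx_inv00_linv hatmxBt ua uc uS; rewrite mxE; exists z.
Qed.
End HatmxInverseRows.

Section HatmxInverseUnits.
Variables (R : unitRingType) (a b c d : R) (B : 'M[R]_3).
Hypotheses (hatmxB : hatmx a b c d *m B = 1%:M) (Bhatmx : B *m hatmx a b c d = 1%:M).

Lemma hatmx_inv11_unit : 1 - d \is a GRing.unit -> B i1 i1 \is a GRing.unit.
Proof.
move=> u1d; have [y yB] := hatmx_inv11_linv hatmxB u1d.
by have [z Bz] := hatmx_inv11_rinv Bhatmx u1d; apply: unitr_linv_rinv yB Bz.
Qed.

Lemma hatmx_inv00_unit :
  a \is a GRing.unit -> b \is a GRing.unit -> c \is a GRing.unit ->
  d - c * a^-1 * b \is a GRing.unit -> B 0 0 \is a GRing.unit.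
Proof.
move=> ua ub uc uS; have [y yB] := hatmx_inv00_linv hatmxB ua ub uS.
by have [z Bz] := hatmx_inv00_rinv Bhatmx ua uc uS; apply: unitr_linv_rinv yB Bz.
Qed.
End HatmxInverseUnits.

Lemma ncinv_spec (R : unitRingType) k (M : 'M[R]_k) : mx_invertible M ->
  M *m ncinv M = 1%:M /\ ncinv M *m M = 1%:M.
Proof.
move=> [N NM].
by apply: (epsilon_spec (inhabits M) (fun N => M *m N = 1%:M /\ N *m M = 1%:M)); exists N.
Qed.

Lemma J2_hatmx (R : unitRingType) (a b c d : R) :
  J2 (hatmx a b c d) = hatmx a^-1 c^-1 b^-1 d^-1.
Proof.
apply/matrixP=> i j; rewrite !mxE.
by case: i => [[|[|[|?]]] ?]; case: j => [[|[|[|?]]] ?] //=; rewrite invr1.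
Qed.

Definition pick2 (r0 r1 : 'I_3) (i : 'I_2) : 'I_3 := if i == 0 then r0 else r1.

Lemma pick2_homo (r0 r1 : 'I_3) : (r0 < r1)%N -> {homo pick2 r0 r1 : x y / (x < y)%N}.
Proof. by move=> lt01 [[|[|?]] ?] [[|[|?]] ?]. Qed.

Section MinorsOfS.
Variables (R : unitRingType) (M : 'M[R]_3).
Hypothesis SM : in_S M.

Lemma in_S_invertible : mx_invertible M.
Proof. by have := SM.1 3 id id (fun _ _ => id) (fun _ _ => id); rewrite mxsub_id. Qed.

Lemma in_S_entry_unit (r s : 'I_3) : M r s \is a GRing.unit.
Proof.
have homo1 (t : 'I_3) : {homo (fun _ : 'I_1 => t) : x y / (x < y)%N} by move=> [[|?] ?] [[|?] ?].
by have := mx1_invertible_unit (SM.1 1 _ _ (homo1 r) (homo1 s)); rewrite mxE.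
Qed.

Lemma in_S_schur_unit (r0 r1 s0 s1 : 'I_3) : (r0 < r1)%N -> (s0 < s1)%N ->
  M r1 s1 - M r1 s0 * (M r0 s0)^-1 * M r0 s1 \is a GRing.unit.
Proof.
move=> lt_r lt_s; have := mx2_schur_unit (SM.1 2 _ _ (pick2_homo lt_r) (pick2_homo lt_s)).
by rewrite !mxE /pick2 /=; apply; apply: in_S_entry_unit.
Qed.
End MinorsOfS.

Section PhiOfHatmx.
Variable R : unitRingType.
Let R_ops := ncring_ops R.
Let R_ring := ncring_laws R.
#[local] Existing Instances R_ops R_ring.

Lemma Phi_hatmx11 (a b c d : R) : mx_invertible (hatmx a b c d) ->
  a \is a GRing.unit -> b \is a GRing.unit -> c \is a GRing.unit ->
  d - 1 \is a GRing.unit -> d - b \is a GRing.unit -> d - c \is a GRing.unit ->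
  d - c * a^-1 * b \is a GRing.unit ->
  Phi (hatmx a b c d) i1 i1
    = (d - 1)^-1 * (d - c) * a^-1 * (d * b^-1 - c * a^-1)^-1 * (d * b^-1 - 1).
Proof.
move=> /ncinv_spec[AB BA] ua ub uc ud1 udb udc uS.
have u1d : 1 - d \is a GRing.unit by rewrite -opprB unitrN.
have udb1 : d * b^-1 - 1 \is a GRing.unit by rewrite subrMV // mul1r; unit_tac.
have uB00 := hatmx_inv00_unit AB BA ua ub uc uS.
have uB11 := hatmx_inv11_unit AB BA u1d.
rewrite /Phi /J2 /LambdaL !mxE.
rewrite (hatmx_inv_col0 AB ua ub uS) (hatmx_inv_col1 AB u1d) invr_cross_ratioL //; [|unit_tac..].
have -> : (1 - d)^-1 = - (d - 1)^-1 by rewrite -invrN opprB.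
by rewrite (subrMV d (c * a^-1) ub) invrM ?unitrV // invrK; ncring.
Qed.

Lemma PhiInv_hatmx11_algebra (a b c d : R) :
  a \is a GRing.unit -> b \is a GRing.unit -> c \is a GRing.unit -> d \is a GRing.unit ->
  d - 1 \is a GRing.unit -> d - b \is a GRing.unit -> d - c \is a GRing.unit ->
  d - c * a^-1 * b \is a GRing.unit ->
  ((d^-1 - c^-1) * (1 - d^-1)^-1)^-1
    * (- ((b * d^-1 - 1) * (d^-1 - b^-1 * a * c^-1)^-1 * b^-1 * a))^-1
  = (d - 1) * (d - c)^-1 * (d * b^-1 - c * a^-1) * (d * b^-1 - 1)^-1.
Proof.
move=> ua ub uc ud ud1 udb udc uS.
rewrite schur_invE // subrVV // sub1rV // !(subrMV _ _ ub) !(subrMV _ _ ud) !mul1r.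
rewrite -[c - d]opprB -[b - d]opprB.
rewrite !(invrN, invrM, invrK); [|unit_tac..].
rewrite !(mulrN, mulNr, opprK) !mulrA.
by rewrite ?(mulrK ub, mulrVK ub, mulrK ud, mulrVK ud, mulrK uc, mulrVK uc, mulrK ua, mulrVK ua).
Qed.

Lemma PhiInv_hatmx11 (a b c d : R) : mx_invertible (J2 (hatmx a b c d)) ->
  a \is a GRing.unit -> b \is a GRing.unit -> c \is a GRing.unit -> d \is a GRing.unit ->
  d - 1 \is a GRing.unit -> d - b \is a GRing.unit -> d - c \is a GRing.unit ->
  d - c * a^-1 * b \is a GRing.unit ->
  PhiInv (hatmx a b c d) i1 i1
    = (d - 1) * (d - c)^-1 * (d * b^-1 - c * a^-1) * (d * b^-1 - 1)^-1.
Proof.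
rewrite J2_hatmx => /ncinv_spec[AC CA] ua ub uc ud ud1 udb udc uS.
have u1d : 1 - d^-1 \is a GRing.unit by rewrite sub1rV //; unit_tac.
have uS' : d^-1 - b^-1 * a^-1^-1 * c^-1 \is a GRing.unit.
  by rewrite invrK schur_invE //; unit_tac.
have uC00 : ncinv (hatmx a^-1 c^-1 b^-1 d^-1) 0 0 \is a GRing.unit.
  by apply: (hatmx_inv00_unit AC CA); rewrite ?unitrV.
have uC11 := hatmx_inv11_unit AC CA u1d.
have uv : d^-1 - c^-1 \is a GRing.unit by rewrite subrVV // -opprB; unit_tac.
have ut : b^-1^-1 * d^-1 - 1 \is a GRing.unit by rewrite invrK subrMV // mul1r -opprB; unit_tac.
rewrite /PhiInv /Jinv J2_hatmx /LambdaR mxE.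
rewrite (hatmx_inv_row1 CA u1d) (hatmx_inv_row0 CA) ?unitrV // cross_ratioR //; [|unit_tac..].
by rewrite !invrK PhiInv_hatmx11_algebra.
Qed.
End PhiOfHatmx.

Theorem lemma9 (R : unitRingType) (a b c d : R) :
  in_hatS (hatmx a b c d) ->
  Phi (hatmx a b c d) i1 i1
    = (d - 1)^-1 * (d - c) * a^-1 * (d * b^-1 - c * a^-1)^-1 * (d * b^-1 - 1)
  /\ PhiInv (hatmx a b c d) i1 i1
    = (d - 1) * (d - c)^-1 * (d * b^-1 - c * a^-1) * (d * b^-1 - 1)^-1.
Proof.
move=> [SA _]; have invA := in_S_invertible SA; have [_ invJ2A] := SA.
have entry r s := in_S_entry_unit SA r s.
have schur r0 r1 s0 s1 := @in_S_schur_unit R _ SA r0 r1 s0 s1.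
have lt02 : ((0%R : 'I_3) < i2)%N by rewrite val_i2.
have lt12 : (i1 < i2)%N by rewrite val_i1 val_i2.
have ua := entry i1 i1; have ub := entry i1 i2; have uc := entry i2 i1; have ud := entry i2 i2.
have ud1 := schur 0%R i2 0%R i2 lt02 lt02; have udc := schur 0%R i2 i1 i2 lt02 lt12.
have udb := schur i1 i2 0%R i2 lt12 lt02; have uS := schur i1 i2 i1 i2 lt12 lt12.
rewrite !hatmxE invr1 ?mulr1 ?mul1r in ua ub uc ud ud1 udc udb uS.
by split; [apply: Phi_hatmx11 | apply: PhiInv_hatmx11].
Qed.
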